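(* Let $(X,U)$ be a measurable space, $\mu:U\to B_2$ a measure, and $f_n:X\to B_2$ ($n\in\mathbb N$) measurable functions converging decreasingly to $0$, i.e. $\mathrm{supp}\,f_0\supset\mathrm{supp}\,f_1\supset\cdots$ and $\bigcap_n\mathrm{supp}\,f_n=\emptyset$. Then the binary sequence $\int f_n\,d\mu=\mu(\mathrm{supp}\,f_n)$ converges to $0$.
   Context: $B_2=\{0,1\}$. A measurable space $(X,U)$: $U\subset2^X$ non-empty, closed under symmetric difference and intersection. $f:X\to B_2$ is measurable if $\mathrm{supp}\,f=\{x:f(x)=1\}\in U$, and $\int f\,d\mu=\mu(\mathrm{supp}\,f)$. $\mu$ is a measure if for every sequence of pairwise disjoint sets of $U$ whose union is in $U$, only finitely many have $\mu$-value 1 and $\mu$ of the union is their number modulo 2. A binary sequence converges to $0$ if it is eventually equal to $0$. *)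

(* Sets are predicates X -> Prop; B_2 = bool (true = 1). *)
From Stdlib Require Import Arith.

Definition symdiff {X : Type} (A B : X -> Prop) : X -> Prop :=
  fun x => (A x /\ ~ B x) \/ (B x /\ ~ A x).

Definition inter {X : Type} (A B : X -> Prop) : X -> Prop :=
  fun x => A x /\ B x.

Definition is_measurable_space {X : Type} (U : (X -> Prop) -> Prop) : Prop :=
  (exists A, U A) /\
  (forall A B, U A -> U B -> U (symdiff A B)) /\
  (forall A B, U A -> U B -> U (inter A B)).

Definition supp {X : Type} (f : X -> bool) : X -> Prop := fun x => f x = true.

Definition measurable_fun {X : Type} (U : (X -> Prop) -> Prop) (f : X -> bool) : Prop :=
  U (supp f).

(* parity of the number of i < N with b i = true (sum in B_2 = Z/2) *)
Fixpoint parity_upto (b : nat -> bool) (N : nat) : bool :=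
  match N with
  | 0 => false
  | S n => xorb (parity_upto b n) (b n)
  end.

Definition bigunion {X : Type} (A : nat -> X -> Prop) : X -> Prop :=
  fun x => exists n, A n x.

Definition pairwise_disjoint {X : Type} (A : nat -> X -> Prop) : Prop :=
  forall i j x, i <> j -> A i x -> A j x -> False.

(* mu : U -> B_2 is a measure (values of mu outside U are irrelevant). *)
Definition is_measure {X : Type} (U : (X -> Prop) -> Prop) (mu : (X -> Prop) -> bool) : Prop :=
  forall A : nat -> X -> Prop,
    (forall n, U (A n)) -> pairwise_disjoint A -> U (bigunion A) ->
    (exists N, forall n, N <= n -> mu (A n) = false) /\
    (forall N, (forall n, N <= n -> mu (A n) = false) ->
               mu (bigunion A) = parity_upto (fun n => mu (A n)) N).

Definition integral {X : Type} (f : X -> bool) (mu : (X -> Prop) -> bool) : bool :=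
  mu (supp f).

(* a binary sequence converges to 0 iff it is eventually 0 *)
Definition bin_cvg0 (b : nat -> bool) : Prop :=
  exists N, forall n, N <= n -> b n = false.

(** A decreasing sequence of sets [D n] with empty intersection is cut into the
    disjoint layers [D n \ D (n+1)], and each [D m] is the disjoint union of the
    layers of index [>= m].  Applied to the whole family of layers, the measure
    axiom makes [mu] vanish on all layers beyond some [N]; applied to the tail
    family starting at [m >= N], it gives [mu (D m)] = the parity of zero terms,
    i.e. [0]. *)

From Stdlib Require Import Arith Lia FunctionalExtensionality PropExtensionality Classical.

Section DecreasingSets.

Context {X : Type}.
Variable D : nat -> X -> Prop.
Hypothesis D_decr : forall n x, D (S n) x -> D n x.
Hypothesis D_inter_empty : forall x, ~ (forall n, D n x).

Lemma D_antitone i j x : i <= j -> D j x -> D i x.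
Proof. intros Hij; induction Hij; auto. Qed.

Definition layer (n : nat) : X -> Prop := symdiff (D n) (D (S n)).

Lemma layer_iff n x : layer n x <-> D n x /\ ~ D (S n) x.
Proof.
  unfold layer, symdiff; split.
  - intros [H | [H1 H2]]; [exact H | exfalso; auto].
  - intros H; left; exact H.
Qed.

Lemma layers_disjoint : pairwise_disjoint layer.
Proof.
  intros i j x Hij Hi Hj.
  apply layer_iff in Hi as [Hi Hi']; apply layer_iff in Hj as [Hj Hj'].
  destruct (Nat.lt_total i j) as [Hlt | [Heq | Hlt]]; [| contradiction |].
  - apply Hi'; apply (D_antitone _ j); [lia | exact Hj].
  - apply Hj'; apply (D_antitone _ i); [lia | exact Hi].
Qed.

Lemma layer_exit m d x : D m x -> ~ D (m + d) x -> exists k, layer (m + k) x.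
Proof.
  revert m; induction d as [| d IH]; intros m Hm Hd.
  - rewrite Nat.add_0_r in Hd; contradiction.
  - destruct (classic (D (S m) x)) as [HSm | HSm].
    + destruct (IH (S m) HSm) as [k Hk]; [rewrite Nat.add_succ_l, <- Nat.add_succ_r; exact Hd |].
      exists (S k); rewrite Nat.add_succ_r, <- Nat.add_succ_l; exact Hk.
    + exists 0; rewrite Nat.add_0_r; apply layer_iff; auto.
Qed.

Lemma tail_layers_union m : bigunion (fun k => layer (m + k)) = D m.
Proof.
  apply functional_extensionality; intro x; apply propositional_extensionality.
  unfold bigunion; split.
  - intros [k Hk]; apply layer_iff in Hk as [Hk _].
    apply (D_antitone m (m + k)); [lia | exact Hk].
  - intros Hm.
    destruct (not_all_ex_not _ _ (D_inter_empty x)) as [n Hn].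
    apply (layer_exit m n x Hm).
    intro H; apply Hn; apply (D_antitone n (m + n)); [lia | exact H].
Qed.

End DecreasingSets.

Lemma pairwise_disjoint_shift {X : Type} (A : nat -> X -> Prop) m :
  pairwise_disjoint A -> pairwise_disjoint (fun k => A (m + k)).
Proof. intros HA i j x Hij; apply HA; lia. Qed.

Lemma measure_tail_unions_cvg0 {X : Type} (U : (X -> Prop) -> Prop)
  (mu : (X -> Prop) -> bool) (A : nat -> X -> Prop) :
  is_measure U mu ->
  (forall n, U (A n)) ->
  pairwise_disjoint A ->
  (forall m, U (bigunion (fun k => A (m + k)))) ->
  bin_cvg0 (fun m => mu (bigunion (fun k => A (m + k)))).
Proof.
  intros Hmu HU Hdisj Htail.
  destruct (Hmu (fun k => A (0 + k)) (fun k => HU _)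
              (pairwise_disjoint_shift A 0 Hdisj) (Htail 0)) as [[N HN] _].
  exists N; intros m Hm.
  destruct (Hmu (fun k => A (m + k)) (fun k => HU _)
              (pairwise_disjoint_shift A m Hdisj) (Htail m)) as [_ Hsum].
  apply (Hsum 0); intros k _; apply (HN (m + k)); lia.
Qed.

Theorem corollary7p10 (X : Type) (U : (X -> Prop) -> Prop) (mu : (X -> Prop) -> bool)
  (f : nat -> X -> bool) :
  is_measurable_space U ->
  is_measure U mu ->
  (forall n, measurable_fun U (f n)) ->
  (forall n x, supp (f (S n)) x -> supp (f n) x) ->
  (forall x, ~ (forall n, supp (f n) x)) ->
  bin_cvg0 (fun n => integral (f n) mu).
Proof.
  intros [_ [Hsymdiff _]] Hmu Hf Hdecr Hempty.
  pose proof (tail_layers_union _ Hdecr Hempty) as Hunion.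
  destruct (measure_tail_unions_cvg0 U mu (layer (fun n => supp (f n))) Hmu) as [N HN].
  - intro n; apply Hsymdiff; apply Hf.
  - apply layers_disjoint; exact Hdecr.
  - intro m; rewrite Hunion; apply Hf.
  - exists N; intros n Hn; unfold integral; rewrite <- Hunion; exact (HN n Hn).
Qed.
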